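(* For every finite set $C$ of level constraints and every level substitution $\theta$: $\theta \vDash C$ if and only if $\theta \vDash \widehat{C}$, where $\widehat{C}$ is obtained by applying the constraint-normalization procedure (described in the context) to every constraint of $C$.
   Context: Level expressions: $l ::= i \mid \mathtt{z} \mid \mathtt{s}\,l \mid l \sqcup l'$, with $i$ in an infinite set $\mathcal{I}$ of level variables equipped with a total order $<$. $\simeq$ is the smallest congruence on level expressions (closed under the constructors and under substitution of levels for level variables) containing $i_1 \sqcup (i_2 \sqcup i_3) \approx (i_1 \sqcup i_2) \sqcup i_3$, $i_1 \sqcup i_2 \approx i_2 \sqcup i_1$, $\mathtt{s}(i_1 \sqcup i_2) \approx \mathtt{s}\,i_1 \sqcup \mathtt{s}\,i_2$, $i \sqcup \mathtt{s}\,i \approx \mathtt{s}\,i$, $i \sqcup \mathtt{z} \approx i$, $i \sqcup i \approx i$. $\mathtt{s}^k l$ is $k$-fold application of $\mathtt{s}$. For a strictly increasing sequence $V = i_1, \dots, i_k$ of level variables and levels $l_{i}$, $\sqcup_{i \in V} l_i$ denotes $l_{i_1} \sqcup (l_{i_2} \sqcup \dots (l_{i_{k-1}} \sqcup l_{i_k})\dots)$. A level is in normal form if it has the form $\mathtt{s}^k\,\mathtt{z} \sqcup (\sqcup_{i \in V} \mathtt{s}^{n_i}\,i)$ with $n_i \le k$ for all $i \in V$; every level $l$ has a unique normal form $\hat{l}$ with $l \simeq \hat{l}$. A constraint is a pair $l_1 = l_2$; for a level substitution $\theta$ and a set of constraints $C$, $\theta \vDash C$ means $l_1\theta \simeq l_2\theta$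 for all $l_1 = l_2 \in C$. The normalization procedure on a constraint $l_1 = l_2$: first replace $l_1, l_2$ by $\hat{l_1}, \hat{l_2}$, written $l_p = \mathtt{s}^{k_p}\,\mathtt{z} \sqcup (\sqcup_{i \in V_p} \mathtt{s}^{n^p_i}\,i)$ for $p = 1,2$; then for each $i \in V_1 \cap V_2$: if $n^1_i < n^2_i$ remove the summand $\mathtt{s}^{n^1_i}\,i$ from $l_1$, and if $n^1_i > n^2_i$ remove the summand $\mathtt{s}^{n^2_i}\,i$ from $l_2$; finally subtract the minimum of the set $\{k_1, k_2\} \cup \{n^1_i\}_{i \in V_1} \cup \{n^2_i\}_{i \in V_2}$ (for the current $V_1, V_2$) from all these exponents. *)

From Stdlib Require Import Arith List.
Import ListNotations.

Inductive level : Type :=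
| LVar : nat -> level
| LZ : level
| LS : level -> level
| LMax : level -> level -> level.

Fixpoint lsubst (th : nat -> level) (l : level) : level :=
  match l with
  | LVar i => th i
  | LZ => LZ
  | LS l => LS (lsubst th l)
  | LMax l1 l2 => LMax (lsubst th l1) (lsubst th l2)
  end.

Inductive lequiv : level -> level -> Prop :=
| leq_refl l : lequiv l l
| leq_sym l1 l2 : lequiv l1 l2 -> lequiv l2 l1
| leq_trans l1 l2 l3 : lequiv l1 l2 -> lequiv l2 l3 -> lequiv l1 l3
| leq_S l1 l2 : lequiv l1 l2 -> lequiv (LS l1) (LS l2)
| leq_Max l1 l2 l1' l2' : lequiv l1 l1' -> lequiv l2 l2' ->
    lequiv (LMax l1 l2) (LMax l1' l2')
| leq_subst (th : nat -> level) l1 l2 : lequiv l1 l2 ->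
    lequiv (lsubst th l1) (lsubst th l2)
| ax_assoc i1 i2 i3 :
    lequiv (LMax (LVar i1) (LMax (LVar i2) (LVar i3)))
           (LMax (LMax (LVar i1) (LVar i2)) (LVar i3))
| ax_comm i1 i2 : lequiv (LMax (LVar i1) (LVar i2)) (LMax (LVar i2) (LVar i1))
| ax_Sdist i1 i2 :
    lequiv (LS (LMax (LVar i1) (LVar i2))) (LMax (LS (LVar i1)) (LS (LVar i2)))
| ax_Sabs i : lequiv (LMax (LVar i) (LS (LVar i))) (LS (LVar i))
| ax_zero i : lequiv (LMax (LVar i) LZ) (LVar i)
| ax_idem i : lequiv (LMax (LVar i) (LVar i)) (LVar i).

Notation "l1 ≃ l2" := (lequiv l1 l2) (at level 70).

Fixpoint sk (k : nat) (l : level) : level :=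
  match k with 0 => l | S k' => LS (sk k' l) end.

(* Representation of a normal form  s^k z ⊔ (⊔_{i∈V} s^{n_i} i):
   the pair (k, [(i_1,n_1);...;(i_m,n_m)]) with i_1 < ... < i_m. *)
Definition nfrep := (nat * list (nat * nat))%type.

Fixpoint join_vars (V : list (nat * nat)) : level :=
  match V with
  | [] => LZ (* unused: only called on non-empty lists *)
  | [(i, n)] => sk n (LVar i)
  | (i, n) :: V' => LMax (sk n (LVar i)) (join_vars V')
  end.

Definition rep_to_level (r : nfrep) : level :=
  match snd r with
  | [] => sk (fst r) LZ
  | V => LMax (sk (fst r) LZ) (join_vars V)
  end.

Fixpoint insert_max (i n : nat) (V : list (nat * nat)) : list (nat * nat) :=
  match V with
  | [] => [(i, n)]
  | (j, m) :: V' =>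
      if i <? j then (i, n) :: V
      else if i =? j then (j, Nat.max n m) :: V'
      else (j, m) :: insert_max i n V'
  end.

Fixpoint merge_max (V W : list (nat * nat)) : list (nat * nat) :=
  match V with
  | [] => W
  | (i, n) :: V' => insert_max i n (merge_max V' W)
  end.

Fixpoint nf_raw (l : level) : nfrep :=
  match l with
  | LVar i => (0, [(i, 0)])
  | LZ => (0, [])
  | LS l' => let (k, V) := nf_raw l' in
             (S k, map (fun p => (fst p, S (snd p))) V)
  | LMax l1 l2 => let (k1, V1) := nf_raw l1 in let (k2, V2) := nf_raw l2 in
                  (Nat.max k1 k2, merge_max V1 V2)
  end.

(* the normal form \hat l (as a representation): the constant part is
   raised so that n_i <= k for all i in V *)
Definition nf (l : level) : nfrep :=
  let (k, V) := nf_raw l in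
  (fold_right (fun p acc => Nat.max (snd p) acc) k V, V).

Definition lhat (l : level) : level := rep_to_level (nf l).

Definition constraint := (level * level)%type.

Definition sat (th : nat -> level) (C : list constraint) : Prop :=
  forall c, In c C -> lsubst th (fst c) ≃ lsubst th (snd c).

Definition lookup (i : nat) (V : list (nat * nat)) : option nat :=
  match find (fun p => fst p =? i) V with
  | Some p => Some (snd p)
  | None => None
  end.

Definition drop_dominated (V W : list (nat * nat)) : list (nat * nat) :=
  filter (fun p => match lookup (fst p) W with
                   | Some m => negb (snd p <? m)
                   | None => true
                   end) V.

Definition norm_constraint (c : constraint) : constraint :=
  let (k1, V1) := nf (fst c) in
  let (k2, V2) := nf (snd c) in
  let V1' := drop_dominated V1 V2 in
  let V2' := drop_dominated V2 V1 in
  let m := fold_right (fun p acc => Nat.min (snd p) acc)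
             (fold_right (fun p acc => Nat.min (snd p) acc) (Nat.min k1 k2) V1')
             V2' in
  let sub := map (fun p => (fst p, snd p - m)) in
  (rep_to_level (k1 - m, sub V1'), rep_to_level (k2 - m, sub V2')).

Definition norm_constraints (C : list constraint) : list constraint :=
  map norm_constraint C.

(* The proof is semantic.  A level denotes a natural number once its
   variables are valued in nat ([eval]); ⊔ is max, s is successor, z is 0.
   1. The congruence ≃ is sound and complete for this semantics:
      l1 ≃ l2 iff eval s l1 = eval s l2 for every valuation s.  Completeness
      goes through a canonical form  s^k z ⊔ ⊔_{i<N} s^{f i} i  whose constant
      k and exponent profile f are both read off the semantics.
   2. The normal form (k, V) computed by [nf] evaluates to
      max k (max_{(i,n) ∈ V} (n + s i)).
   3. For every valuation, the two sides of a constraint evaluate to equal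
      numbers iff the two sides of the normalized constraint do: a dropped
      summand is strictly below the other side, and subtracting the common
      minimum exponent shifts both sides by the same amount.
   Since eval s (l θ) = eval (eval s ∘ θ) l, step 1 turns satisfaction of a
   constraint by θ into a family of such numeric equations, and the theorem
   follows constraint by constraint. *)

From Stdlib Require Import List Arith Lia Setoid Morphisms.
Import ListNotations.

Fixpoint eval (s : nat -> nat) (l : level) : nat :=
  match l with
  | LVar i => s i
  | LZ => 0
  | LS l => S (eval s l)
  | LMax a b => Nat.max (eval s a) (eval s b)
  end.

Lemma eval_sk s n l : eval s (sk n l) = n + eval s l.
Proof. induction n; simpl; lia. Qed.

Lemma eval_lsubst s th l :
  eval s (lsubst th l) = eval (fun i => eval s (th i)) l.
Proof. induction l; simpl; auto. Qed.

Lemma lequiv_sound a b : a ≃ b -> forall s, eval s a = eval s b.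
Proof.
  induction 1; intro s; simpl; rewrite ?eval_lsubst; try lia;
    rewrite ?IHlequiv, ?IHlequiv1, ?IHlequiv2; reflexivity.
Qed.

#[export] Instance lequiv_equivalence : Equivalence lequiv.
Proof. split; red; eauto using leq_refl, leq_sym, leq_trans. Qed.

#[export] Instance LS_proper : Proper (lequiv ==> lequiv) LS.
Proof. intros ? ? H; exact (leq_S _ _ H). Qed.

#[export] Instance LMax_proper : Proper (lequiv ==> lequiv ==> lequiv) LMax.
Proof. intros ? ? H1 ? ? H2; exact (leq_Max _ _ _ _ H1 H2). Qed.

(* The axioms are stated on variables; instantiating the variables 0, 1, 2
   yields them for arbitrary levels. *)
Definition subst3 (x y z : level) : nat -> level :=
  fun i => match i with 0 => x | 1 => y | _ => z end.

Lemma max_assoc x y z : LMax x (LMax y z) ≃ LMax (LMax x y) z.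
Proof. exact (leq_subst (subst3 x y z) _ _ (ax_assoc 0 1 2)). Qed.

Lemma max_comm x y : LMax x y ≃ LMax y x.
Proof. exact (leq_subst (subst3 x y x) _ _ (ax_comm 0 1)). Qed.

Lemma S_max_distr x y : LS (LMax x y) ≃ LMax (LS x) (LS y).
Proof. exact (leq_subst (subst3 x y x) _ _ (ax_Sdist 0 1)). Qed.

Lemma max_S_absorb x : LMax x (LS x) ≃ LS x.
Proof. exact (leq_subst (subst3 x x x) _ _ (ax_Sabs 0)). Qed.

Lemma max_zero_r x : LMax x LZ ≃ x.
Proof. exact (leq_subst (subst3 x x x) _ _ (ax_zero 0)). Qed.

Lemma max_idem x : LMax x x ≃ x.
Proof. exact (leq_subst (subst3 x x x) _ _ (ax_idem 0)). Qed.

Lemma max_zero_l x : LMax LZ x ≃ x.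
Proof. rewrite max_comm; apply max_zero_r. Qed.

Lemma max_swap a b c d : LMax (LMax a b) (LMax c d) ≃ LMax (LMax a c) (LMax b d).
Proof.
  rewrite <- max_assoc, (max_assoc b c d), (max_comm b c), <- (max_assoc c b d).
  apply max_assoc.
Qed.

#[export] Instance sk_proper n : Proper (lequiv ==> lequiv) (sk n).
Proof. induction n; intros x y H; simpl; [exact H | now rewrite (IHn x y H)]. Qed.

Lemma sk_max_distr n a b : sk n (LMax a b) ≃ LMax (sk n a) (sk n b).
Proof. induction n; simpl; [reflexivity | now rewrite IHn, S_max_distr]. Qed.

Lemma sk_add n d x : sk (n + d) x = sk n (sk d x).
Proof. induction n; simpl; congruence. Qed.

Lemma max_sk_absorb d x : LMax x (sk d x) ≃ sk d x.
Proof.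
  induction d; simpl; [apply max_idem|].
  rewrite <- IHd at 1.
  rewrite S_max_distr, max_assoc, max_S_absorb, <- S_max_distr, IHd.
  reflexivity.
Qed.

Lemma sk_max a b x : LMax (sk a x) (sk b x) ≃ sk (Nat.max a b) x.
Proof.
  assert (Hle : forall n m, n <= m -> LMax (sk n x) (sk m x) ≃ sk m x).
  { intros n m H. replace m with (n + (m - n)) by lia.
    rewrite sk_add, <- sk_max_distr, max_sk_absorb. reflexivity. }
  destruct (le_ge_dec a b).
  - rewrite Nat.max_r by lia; auto.
  - rewrite max_comm, Nat.max_l by lia; auto.
Qed.

(* Canonical forms  s^k z ⊔ ⊔_{i<N} s^{f i} i , where f i = None means that
   the variable i does not occur. *)
Definition omax (o1 o2 : option nat) : option nat :=
  match o1, o2 with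
  | Some a, Some b => Some (Nat.max a b)
  | Some a, None => Some a
  | None, o => o
  end.

Fixpoint profile (l : level) : nat -> option nat :=
  match l with
  | LVar j => fun i => if i =? j then Some 0 else None
  | LZ => fun _ => None
  | LS l => fun i => option_map S (profile l i)
  | LMax a b => fun i => omax (profile a i) (profile b i)
  end.

Definition summand (o : option nat) (i : nat) : level :=
  match o with Some n => sk n (LVar i) | None => LZ end.

Fixpoint vjoin (N : nat) (f : nat -> option nat) : level :=
  match N with
  | 0 => LZ
  | S N' => LMax (vjoin N' f) (summand (f N') N')
  end.

Definition canon (N k : nat) (f : nat -> option nat) : level :=
  LMax (sk k LZ) (vjoin N f).

Fixpoint maxvar (l : level) : nat :=
  match l with
  | LVar i => i
  | LZ => 0
  | LS l => maxvar l
  | LMax a b => Nat.max (maxvar a) (maxvar b)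
  end.

Lemma vjoin_ext N f g : (forall i, f i = g i) -> vjoin N f = vjoin N g.
Proof. intro H; induction N; simpl; [reflexivity | now rewrite IHN, H]. Qed.

Lemma vjoin_none N f : (forall i, i < N -> f i = None) -> vjoin N f ≃ LZ.
Proof.
  induction N; simpl; intro H; [reflexivity|].
  rewrite H by lia. rewrite IHN by (intros; apply H; lia). apply max_idem.
Qed.

Lemma vjoin_var N j :
  j < N -> vjoin N (fun i => if i =? j then Some 0 else None) ≃ LVar j.
Proof.
  induction N; intro Hj; [lia|]. simpl.
  destruct (Nat.eqb_spec N j) as [->|Hne].
  - rewrite vjoin_none; [apply max_zero_l|].
    intros i Hi. destruct (Nat.eqb_spec i j); [lia | reflexivity].
  - rewrite IHN by lia. apply max_zero_r.
Qed.

Lemma vjoin_max N f g :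
  LMax (vjoin N f) (vjoin N g) ≃ vjoin N (fun i => omax (f i) (g i)).
Proof.
  induction N; simpl; [apply max_idem|].
  rewrite max_swap, IHN. apply LMax_proper; [reflexivity|].
  destruct (f N), (g N); simpl;
    auto using sk_max, max_zero_r, max_zero_l, max_idem.
Qed.

Lemma vjoin_S N f :
  LS (vjoin N f) ≃ LMax (LS LZ) (vjoin N (fun i => option_map S (f i))).
Proof.
  induction N; simpl; [symmetry; apply max_zero_r|].
  rewrite S_max_distr, IHN. destruct (f N); simpl.
  - symmetry; apply max_assoc.
  - now rewrite max_zero_r, max_comm, max_assoc, max_idem.
Qed.

Lemma level_canon l N :
  maxvar l < N -> l ≃ canon N (eval (fun _ => 0) l) (profile l).
Proof.
  revert N; induction l; simpl; intros N HN; unfold canon.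
  - rewrite vjoin_var by lia. symmetry; apply max_zero_l.
  - rewrite vjoin_none by auto. symmetry; apply max_idem.
  - rewrite (IHl N HN) at 1. unfold canon.
    rewrite S_max_distr, vjoin_S, max_assoc.
    apply LMax_proper; [|reflexivity].
    change (LMax (sk (S (eval (fun _ => 0) l)) LZ) (sk 1 LZ)
            ≃ sk (S (eval (fun _ => 0) l)) LZ).
    rewrite sk_max, Nat.max_l by lia. reflexivity.
  - rewrite (IHl1 N), (IHl2 N) at 1 by lia. unfold canon.
    now rewrite max_swap, vjoin_max, sk_max.
Qed.

Definition point (i M : nat) : nat -> nat := fun j => if j =? i then M else 0.

(* The profile is determined by the semantics: raising variable i alone to a
   large M raises the value to n + M when i occurs with exponent n, and does
   not change it when i does not occur. *)
Lemma profile_semantics l i :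
  match profile l i with
  | None => forall M, eval (point i M) l = eval (fun _ => 0) l
  | Some n => forall M, eval (fun _ => 0) l <= M -> eval (point i M) l = n + M
  end.
Proof.
  induction l; simpl.
  - unfold point. destruct (Nat.eqb_spec i n) as [->|Hne].
    + intros M _. rewrite Nat.eqb_refl; lia.
    + intro M. destruct (Nat.eqb_spec n i); [congruence | reflexivity].
  - reflexivity.
  - destruct (profile l i); simpl; intros; rewrite IHl; lia.
  - destruct (profile l1 i), (profile l2 i); simpl; intros;
      rewrite ?IHl1, ?IHl2 by lia; lia.
Qed.

(* Completeness: levels with the same value everywhere are congruent, since
   they have the same canonical form. *)
Lemma lequiv_complete a b : (forall s, eval s a = eval s b) -> a ≃ b.
Proof.
  intro H. set (N := S (Nat.max (maxvar a) (maxvar b))).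
  rewrite (level_canon a N), (level_canon b N) by (unfold N; lia).
  assert (Hprof : forall i, profile a i = profile b i).
  { intro i. pose proof (profile_semantics a i) as Ca.
    pose proof (profile_semantics b i) as Cb.
    set (M := S (eval (fun _ => 0) a)).
    pose proof (H (fun _ => 0)) as H0. pose proof (H (point i M)) as HM.
    destruct (profile a i), (profile b i);
      rewrite ?Ca, ?Cb in HM by (unfold M; lia); f_equal; lia. }
  unfold canon. now rewrite H, (vjoin_ext N _ _ Hprof).
Qed.

Lemma lequiv_iff_eval a b : a ≃ b <-> forall s, eval s a = eval s b.
Proof. split; [apply lequiv_sound | apply lequiv_complete]. Qed.

Definition eval_summands (s : nat -> nat) (V : list (nat * nat)) : nat :=
  fold_right (fun p acc => Nat.max (snd p + s (fst p)) acc) 0 V.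

Lemma eval_summands_cons s p V :
  eval_summands s (p :: V) = Nat.max (snd p + s (fst p)) (eval_summands s V).
Proof. reflexivity. Qed.

Lemma eval_summands_in s p V : In p V -> snd p + s (fst p) <= eval_summands s V.
Proof.
  induction V as [|q V IH]; simpl; [tauto|].
  intros [<-|Hin]; [lia | specialize (IH Hin); lia].
Qed.

Lemma eval_join_vars s V : V <> [] -> eval s (join_vars V) = eval_summands s V.
Proof.
  induction V as [|[i n] [|q V] IH]; intro Hne; [congruence| |].
  - simpl. rewrite eval_sk. simpl. lia.
  - change (Nat.max (eval s (sk n (LVar i))) (eval s (join_vars (q :: V)))
            = eval_summands s ((i, n) :: q :: V)).
    rewrite eval_sk, IH by discriminate. reflexivity.
Qed.

Lemma eval_rep_to_level s k V :
  eval s (rep_to_level (k, V)) = Nat.max k (eval_summands s V).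
Proof.
  unfold rep_to_level; simpl. destruct V as [|p V].
  - rewrite eval_sk. simpl. lia.
  - change (Nat.max (eval s (sk k LZ)) (eval s (join_vars (p :: V)))
            = Nat.max k (eval_summands s (p :: V))).
    rewrite eval_sk, eval_join_vars by discriminate. simpl. lia.
Qed.

Lemma eval_insert_max s i n V :
  eval_summands s (insert_max i n V) = Nat.max (n + s i) (eval_summands s V).
Proof.
  induction V as [|[j m] V IH]; simpl; [lia|].
  destruct (Nat.ltb_spec i j); simpl; [lia|].
  destruct (Nat.eqb_spec i j) as [->|]; simpl; [lia|].
  rewrite IH; lia.
Qed.

Lemma eval_merge_max s V W :
  eval_summands s (merge_max V W) = Nat.max (eval_summands s V) (eval_summands s W).
Proof.
  induction V as [|[i n] V IH]; simpl; [lia|]. rewrite eval_insert_max, IH. lia.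
Qed.

Lemma eval_summands_succ s k V :
  Nat.max (S k) (eval_summands s (map (fun p => (fst p, S (snd p))) V))
  = S (Nat.max k (eval_summands s V)).
Proof.
  induction V as [|p V IH]; [simpl; lia|].
  rewrite map_cons, !eval_summands_cons. cbn [fst snd]. lia.
Qed.

Lemma eval_nf_raw s l :
  eval s l = Nat.max (fst (nf_raw l)) (eval_summands s (snd (nf_raw l))).
Proof.
  induction l; simpl; try lia.
  - destruct (nf_raw l) as [k V]. simpl in *. rewrite IHl. symmetry.
    apply eval_summands_succ.
  - destruct (nf_raw l1) as [k1 V1], (nf_raw l2) as [k2 V2]. simpl in *.
    rewrite eval_merge_max. lia.
Qed.

Lemma eval_raise_constant s k V :
  Nat.max (fold_right (fun p acc => Nat.max (snd p) acc) k V) (eval_summands s V)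
  = Nat.max k (eval_summands s V).
Proof. induction V as [|p V IH]; simpl in *; lia. Qed.

Lemma eval_nf s l : eval s l = Nat.max (fst (nf l)) (eval_summands s (snd (nf l))).
Proof.
  unfold nf. rewrite eval_nf_raw. destruct (nf_raw l) as [k V].
  symmetry; apply eval_raise_constant.
Qed.

Lemma eval_drop_dominated s V W :
  exists d, eval_summands s V = Nat.max (eval_summands s (drop_dominated V W)) d
            /\ (d = 0 \/ d < eval_summands s W).
Proof.
  induction V as [|[i n] V [d [Hd Hlt]]]; [exists 0; simpl; auto|].
  unfold drop_dominated in *; simpl.
  destruct (lookup i W) as [m|] eqn:Hlook; [destruct (Nat.ltb_spec n m)|];
    simpl; try (exists d; split; [lia | exact Hlt]).
  exists (Nat.max (n + s i) d). split; [lia|]. right.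
  unfold lookup in Hlook.
  destruct (find (fun p => fst p =? i) W) as [p|] eqn:Hfind; [|discriminate].
  injection Hlook as <-. apply find_some in Hfind as [Hin Hvar].
  apply Nat.eqb_eq in Hvar. pose proof (eval_summands_in s p W Hin).
  rewrite Hvar in *. lia.
Qed.

Lemma eval_shift_down s k m V :
  m <= k -> (forall p, In p V -> m <= snd p) ->
  Nat.max (k - m) (eval_summands s (map (fun p => (fst p, snd p - m)) V)) + m
  = Nat.max k (eval_summands s V).
Proof.
  intro Hk. induction V as [|p V IH]; intro Hm; simpl; [lia|].
  assert (Hp := Hm p (or_introl eq_refl)).
  assert (IH' := IH (fun q Hq => Hm q (or_intror Hq))). simpl in IH'. lia.
Qed.

Lemma fold_min_lower_bound b V :
  let m := fold_right (fun (p : nat * nat) acc => Nat.min (snd p) acc) b V in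
  m <= b /\ forall p, In p V -> m <= snd p.
Proof.
  induction V as [|q V [IH1 IH2]]; simpl; [split; [lia | tauto]|].
  split; [lia|]. intros p [<-|Hp]; [lia | specialize (IH2 p Hp); lia].
Qed.

Lemma max_drop_dominated k1 e1 d1 k2 e2 d2 :
  (d1 = 0 \/ d1 < Nat.max e2 d2) -> (d2 = 0 \/ d2 < Nat.max e1 d1) ->
  Nat.max k1 (Nat.max e1 d1) = Nat.max k2 (Nat.max e2 d2)
  <-> Nat.max k1 e1 = Nat.max k2 e2.
Proof. lia. Qed.

Lemma norm_constraint_eval s c :
  eval s (fst c) = eval s (snd c)
  <-> eval s (fst (norm_constraint c)) = eval s (snd (norm_constraint c)).
Proof.
  destruct c as [a b]. unfold norm_constraint. simpl.
  rewrite (eval_nf s a), (eval_nf s b).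
  destruct (nf a) as [k1 V1], (nf b) as [k2 V2]. simpl. rewrite !eval_rep_to_level.
  destruct (eval_drop_dominated s V1 V2) as [d1 [E1 D1]].
  destruct (eval_drop_dominated s V2 V1) as [d2 [E2 D2]].
  set (V1' := drop_dominated V1 V2) in *. set (V2' := drop_dominated V2 V1) in *.
  destruct (fold_min_lower_bound (Nat.min k1 k2) V1') as [M1 M1'].
  destruct (fold_min_lower_bound
              (fold_right (fun (p : nat * nat) acc => Nat.min (snd p) acc)
                 (Nat.min k1 k2) V1') V2')
    as [M2 M2'].
  set (m := fold_right _ _ V2') in *.
  assert (S1 := eval_shift_down s k1 m V1' ltac:(lia)
                  ltac:(intros p Hp; specialize (M1' p Hp); lia)).
  assert (S2 := eval_shift_down s k2 m V2' ltac:(lia) M2').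
  rewrite E2 in D1. rewrite E1 in D2. rewrite E1, E2, max_drop_dominated by assumption.
  rewrite <- S1, <- S2. apply Nat.add_cancel_r.
Qed.

Lemma norm_constraint_sat th c :
  lsubst th (fst c) ≃ lsubst th (snd c)
  <-> lsubst th (fst (norm_constraint c)) ≃ lsubst th (snd (norm_constraint c)).
Proof.
  rewrite !lequiv_iff_eval.
  split; intros H s; specialize (H s); rewrite !eval_lsubst in *;
    [apply norm_constraint_eval in H | apply norm_constraint_eval]; exact H.
Qed.

Theorem mainTheorem6 (C : list constraint) (th : nat -> level) :
  sat th C <-> sat th (norm_constraints C).
Proof.
  unfold sat, norm_constraints. split.
  - intros H c' Hc'. apply in_map_iff in Hc' as [c [<- Hc]].
    apply (norm_constraint_sat th c), H, Hc.
  - intros H c Hc. apply (norm_constraint_sat th c), H, in_map, Hc.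
Qed.
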